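(* Let $n\ge 1$ be an integer, $a>0$, and let $a_0,\dots,a_{n-1}:((-a,a)\setminus\{0\})\times\mathbb{K}\to\mathbb{K}$ be arbitrary functions, where $\mathbb{K}=\mathbb{R}$ or $\mathbb{C}$. Let $f\in C^\infty(-a,a)$ be a solution of $$f^{(n)}(x)+a_{n-1}(x,f(x))f^{(n-1)}(x)+\cdots+a_0(x,f(x))f(x)=0,\qquad x\in(-a,a)\setminus\{0\},$$ satisfying $f(0)=f'(0)=\cdots=f^{(n-1)}(0)=0$. If $$|a_k(x,f(x))|=o\!\left(\frac{1}{|x|^{n-k}}\right)\quad\text{as }x\to 0,\qquad k=0,1,\dots,n-1,$$ then there exists $\delta>0$ such that $f\equiv 0$ on $[-\delta,\delta]$.
   Context: The coefficients may be singular at $x=0$; the equation is only required to hold for $x\neq 0$. *)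

From Stdlib Require Import Reals.
Open Scope R_scope.

(* D is a sequence of derivatives on (-a,a): D (S k) = (D k)' there.
   With D 0 = f this says f is C^infty on (-a,a) with f^(k) = D k. *)
Definition derivs_on (a : R) (D : nat -> R -> R) : Prop :=
  forall (k : nat) (x : R), -a < x < a -> derivable_pt_lim (D k) x (D (S k) x).

Definition CC := (R * R)%type.
Definition Cadd (z w : CC) : CC := (fst z + fst w, snd z + snd w).
Definition Cmul (z w : CC) : CC :=
  (fst z * fst w - snd z * snd w, fst z * snd w + snd z * fst w).
Definition C0 : CC := (0, 0).
Definition Cmod (z : CC) : R := sqrt (fst z ^ 2 + snd z ^ 2).

Definition Cderivs_on (a : R) (D : nat -> R -> CC) : Prop :=
  forall (k : nat) (x : R), -a < x < a ->
    derivable_pt_lim (fun t => fst (D k t)) x (fst (D (S k) x)) /\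
    derivable_pt_lim (fun t => snd (D k t)) x (snd (D (S k) x)).

Fixpoint Csum (m : nat) (F : nat -> CC) : CC :=
  match m with
  | O => C0
  | S m' => Cadd (Csum m' F) (F m')
  end.

From Stdlib Require Import Reals Lra Lia.
Open Scope R_scope.

(* Let M be the maximum of |f^(n)| on a small interval [-r,r].  Since
   f, f', ..., f^(n-1) vanish at 0, applying the mean value inequality n - k
   times gives |f^(k)(x)| <= (2|x|)^(n-k) M on [-r,r] (the factor 2 comes from
   treating real and imaginary parts separately).  If the coefficients satisfy
   |a_k(x,f(x))| <= eps / |x|^(n-k) for 0 < |x| <= r, the equation yields
   |f^(n)(x)| <= 2 n 2^n eps M = M/2 for the choice eps = 1/(4 n 2^n), and by
   continuity also at x = 0.  Hence M <= M/2, so M = 0 and f = 0 on [-r,r]. *)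

Lemma mvt_bound_from_zero (g g' : R -> R) (x B : R) :
  g 0 = 0 ->
  (forall c, Rabs c <= Rabs x -> derivable_pt_lim g c (g' c) /\ Rabs (g' c) <= B) ->
  Rabs (g x) <= Rabs x * B.
Proof.
  intros g0 Hg.
  assert (Hbetween : forall c, Rmin 0 x <= c <= Rmax 0 x -> Rabs c <= Rabs x).
  { intros c; unfold Rmin, Rmax; destruct (Rle_dec 0 x); split_Rabs; lra. }
  destruct (MVT_abs g g' 0 x) as [c [Hc Hcx]].
  { intros c Hc; apply Hg, Hbetween, Hc. }
  rewrite g0, !Rminus_0_r in Hc; rewrite Hc, Rmult_comm.
  apply Rmult_le_compat_l; [apply Rabs_pos | apply Hg, Hbetween, Hcx].
Qed.

Lemma Cmod_nonneg (z : CC) : 0 <= Cmod z.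
Proof. apply sqrt_pos. Qed.

Lemma Cmod_fst (z : CC) : Rabs (fst z) <= Cmod z.
Proof.
  unfold Cmod; rewrite <- sqrt_Rsqr_abs; apply sqrt_le_1_alt.
  unfold Rsqr; generalize (pow2_ge_0 (snd z)); simpl; lra.
Qed.

Lemma Cmod_snd (z : CC) : Rabs (snd z) <= Cmod z.
Proof.
  unfold Cmod; rewrite <- sqrt_Rsqr_abs; apply sqrt_le_1_alt.
  unfold Rsqr; generalize (pow2_ge_0 (fst z)); simpl; lra.
Qed.

Lemma Cmod_le_sum (z : CC) : Cmod z <= Rabs (fst z) + Rabs (snd z).
Proof.
  generalize (Rabs_pos (fst z)) (Rabs_pos (snd z)); intros Hre Him.
  unfold Cmod; rewrite <- (sqrt_Rsqr (Rabs (fst z) + Rabs (snd z))) by lra.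
  apply sqrt_le_1_alt; unfold Rsqr.
  rewrite <- (pow2_abs (fst z)), <- (pow2_abs (snd z)); nra.
Qed.

Lemma Cmod_mul (z w : CC) : Cmod (Cmul z w) = Cmod z * Cmod w.
Proof.
  unfold Cmod, Cmul; rewrite <- sqrt_mult_alt.
  - f_equal; simpl; ring.
  - generalize (pow2_ge_0 (fst z)) (pow2_ge_0 (snd z)); lra.
Qed.

Lemma Cmod_eq0 (z : CC) : Cmod z = 0 -> z = C0.
Proof.
  destruct z as [p q]; unfold Cmod, C0; simpl; intros H.
  apply sqrt_eq_0 in H; [| nra].
  assert (p = 0) by nra; assert (q = 0) by nra; subst; reflexivity.
Qed.

Lemma Cmod_real (p : R) : Cmod (p, 0) = Rabs p.
Proof. unfold Cmod; simpl; rewrite <- sqrt_Rsqr_abs; f_equal; unfold Rsqr; ring. Qed.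

Lemma Cmod_opposite (z w : CC) : Cadd z w = C0 -> Cmod z = Cmod w.
Proof.
  destruct z as [p q], w as [u v]; unfold Cadd, C0, Cmod; simpl.
  intros E; injection E; intros; f_equal; nra.
Qed.

Lemma Csum_components (m : nat) (F : nat -> CC) :
  Csum (S m) F = (sum_f_R0 (fun k => fst (F k)) m, sum_f_R0 (fun k => snd (F k)) m).
Proof.
  induction m as [|m IH].
  - simpl; unfold Cadd, C0; simpl; f_equal; ring.
  - change (Csum (S (S m)) F) with (Cadd (Csum (S m) F) (F (S m))).
    rewrite IH; reflexivity.
Qed.

Lemma Csum_bound (m : nat) (F : nat -> CC) (c : R) :
  (forall k, (k < m)%nat -> Cmod (F k) <= c) -> Cmod (Csum m F) <= 2 * INR m * c.
Proof.
  intros HF.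
  assert (Hparts : Rabs (fst (Csum m F)) <= INR m * c /\ Rabs (snd (Csum m F)) <= INR m * c).
  { induction m as [|m IH].
    - simpl; rewrite Rabs_R0; lra.
    - destruct IH as [IHre IHim]; [intros; apply HF; lia|].
      assert (HFm := HF m (Nat.lt_succ_diag_r m)).
      generalize (Cmod_fst (F m)) (Cmod_snd (F m)); intros Hre Him.
      change (Csum (S m) F) with (Cadd (Csum m F) (F m)); unfold Cadd; cbn [fst snd].
      rewrite S_INR; split; (eapply Rle_trans; [apply Rabs_triang | lra]). }
  generalize (Cmod_le_sum (Csum m F)); lra.
Qed.

Lemma Cmod_continuity_pt (g : R -> CC) (c : R) :
  continuity_pt (fun t => fst (g t)) c -> continuity_pt (fun t => snd (g t)) c ->
  continuity_pt (fun t => Cmod (g t)) c.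
Proof.
  intros Hre Him.
  apply continuity_pt_locally_ext with (a := 1)
    (f := comp sqrt ((fun t => fst (g t)) * (fun t => fst (g t)) +
                     (fun t => snd (g t)) * (fun t => snd (g t)))%F); [lra | |].
  - intros t _; unfold comp, Cmod, plus_fct, mult_fct; f_equal; ring.
  - apply continuity_pt_comp.
    + apply continuity_pt_plus; apply continuity_pt_mult; assumption.
    + apply continuity_pt_sqrt; unfold plus_fct, mult_fct; nra.
Qed.

(* Mean value inequality for a complex function vanishing at 0: each part
   grows at most like |x| B, so the modulus at most like 2 |x| B. *)
Lemma Cmvt_bound_from_zero (g g' : R -> CC) (x B : R) :
  g 0 = C0 ->
  (forall c, Rabs c <= Rabs x ->
     derivable_pt_lim (fun t => fst (g t)) c (fst (g' c)) /\
     derivable_pt_lim (fun t => snd (g t)) c (snd (g' c)) /\ Cmod (g' c) <= B) ->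
  Cmod (g x) <= 2 * Rabs x * B.
Proof.
  intros g0 Hg.
  assert (Hre : Rabs (fst (g x)) <= Rabs x * B).
  { apply (mvt_bound_from_zero (fun t => fst (g t)) (fun t => fst (g' t))).
    - rewrite g0; reflexivity.
    - intros c Hc; destruct (Hg c Hc) as [Hd [_ HB]].
      split; [exact Hd | eapply Rle_trans; [apply Cmod_fst | exact HB]]. }
  assert (Him : Rabs (snd (g x)) <= Rabs x * B).
  { apply (mvt_bound_from_zero (fun t => snd (g t)) (fun t => snd (g' t))).
    - rewrite g0; reflexivity.
    - intros c Hc; destruct (Hg c Hc) as [_ [Hd HB]].
      split; [exact Hd | eapply Rle_trans; [apply Cmod_snd | exact HB]]. }
  generalize (Cmod_le_sum (g x)); lra.
Qed.

(* Iterating the mean value inequality from the top derivative down: if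
   D 0, ..., D (n-1) vanish at 0 and |D n| <= M on [-r,r], then
   |D (n-j)| <= (2|x|)^j M there. *)
Lemma vanishing_derivatives_bound (a r M : R) (n : nat) (D : nat -> R -> CC) :
  Cderivs_on a D -> r < a -> (forall k, (k < n)%nat -> D k 0 = C0) ->
  (forall y, -r <= y <= r -> Cmod (D n y) <= M) ->
  forall j, (j <= n)%nat -> forall x, -r <= x <= r ->
    Cmod (D (n - j)%nat x) <= 2 ^ j * Rabs x ^ j * M.
Proof.
  intros Hd Hra Hzero HM j; induction j as [|j IH]; intros Hj x Hx.
  - rewrite Nat.sub_0_r; simpl; rewrite !Rmult_1_l; apply HM, Hx.
  - assert (HM0 : 0 <= M).
    { apply Rle_trans with (Cmod (D n 0)); [apply Cmod_nonneg | apply HM; lra]. }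
    assert (Hsucc : S (n - S j) = (n - j)%nat) by lia.
    replace (2 ^ S j * Rabs x ^ S j * M) with (2 * Rabs x * (2 ^ j * Rabs x ^ j * M))
      by (simpl; ring).
    apply (Cmvt_bound_from_zero _ (D (n - j)%nat)); [apply Hzero; lia|].
    intros c Hc.
    assert (Hca : -a < c < a) by (split_Rabs; lra).
    destruct (Hd (n - S j)%nat c Hca) as [Hre Him]; rewrite Hsucc in Hre, Him.
    split; [exact Hre | split; [exact Him|]].
    apply Rle_trans with (2 ^ j * Rabs c ^ j * M).
    + apply IH; [lia | split_Rabs; lra].
    + apply Rmult_le_compat_r; [exact HM0|].
      apply Rmult_le_compat_l; [apply pow_le; lra|].
      apply pow_incr; split; [apply Rabs_pos | exact Hc].
Qed.

Lemma bound_extends_to_point (h : R -> R) (r c : R) :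
  0 < r -> continuity_pt h 0 -> (forall x, 0 < Rabs x <= r -> h x <= c) -> h 0 <= c.
Proof.
  intros Hr Hcont Hbound.
  destruct (Rle_or_lt (h 0) c) as [Hle | Hgt]; [exact Hle | exfalso].
  destruct (Hcont (h 0 - c)) as [del [Hdel Hnear]]; [lra|].
  set (x := Rmin (del / 2) r).
  assert (Hx : 0 < x <= r /\ x < del).
  { assert (x <= del / 2) by apply Rmin_l; assert (x <= r) by apply Rmin_r.
    assert (0 < x) by (apply Rmin_glb_lt; lra); lra. }
  assert (Hclose : Rabs (h x - h 0) < h 0 - c).
  { apply (Hnear x); split; [split; [exact I | lra] |].
    simpl; unfold R_dist; rewrite Rminus_0_r, Rabs_right; lra. }
  assert (h x <= c) by (apply Hbound; rewrite Rabs_right; lra).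
  split_Rabs; lra.
Qed.

Lemma uniform_threshold (n : nat) (P : nat -> R -> Prop) :
  (forall k eta eta', 0 < eta' <= eta -> P k eta -> P k eta') ->
  (forall k, (k < n)%nat -> exists eta, 0 < eta /\ P k eta) ->
  exists eta, 0 < eta /\ forall k, (k < n)%nat -> P k eta.
Proof.
  intros Hmono; induction n as [|n IH]; intros Hex.
  - exists 1; split; [lra | intros; lia].
  - destruct IH as [e1 [He1 H1]]; [intros; apply Hex; lia|].
    destruct (Hex n) as [e2 [He2 H2]]; [lia|].
    assert (Hmin : 0 < Rmin e1 e2) by (apply Rmin_glb_lt; lra).
    exists (Rmin e1 e2); split; [exact Hmin|].
    intros k Hk; destruct (Nat.eq_dec k n) as [-> | Hne].
    + apply Hmono with e2; [split; [exact Hmin | apply Rmin_r] | exact H2].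
    + apply Hmono with e1; [split; [exact Hmin | apply Rmin_l] | apply H1; lia].
Qed.

Lemma leading_term_bound (n : nat) (z : CC) (coef d : nat -> CC) (b : R) :
  Cadd z (Csum n (fun k => Cmul (coef k) (d k))) = C0 ->
  (forall k, (k < n)%nat -> Cmod (coef k) * Cmod (d k) <= b) ->
  Cmod z <= 2 * INR n * b.
Proof.
  intros Heq Hterms; rewrite (Cmod_opposite _ _ Heq).
  apply Csum_bound; intros k Hk; rewrite Cmod_mul; apply Hterms, Hk.
Qed.

Section ComplexCase.

Variables (n : nat) (a : R) (A : nat -> R -> CC -> CC) (f : R -> CC)
          (D : nat -> R -> CC).
Hypothesis n_pos : (1 <= n)%nat.
Hypothesis a_pos : 0 < a.
Hypothesis D0_f : D 0%nat = f.
Hypothesis D_derivs : Cderivs_on a D.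
Hypothesis ode : forall x, -a < x < a -> x <> 0 ->
  Cadd (D n x) (Csum n (fun k => Cmul (A k x (f x)) (D k x))) = C0.
Hypothesis initial_zero : forall k, (k < n)%nat -> D k 0 = C0.
Hypothesis small_coefs : forall k, (k < n)%nat ->
  forall eps, 0 < eps -> exists eta, 0 < eta /\
    forall x, 0 < Rabs x < eta -> Rabs x < a ->
      Cmod (A k x (f x)) <= eps / (Rabs x ^ (n - k)).

Lemma top_derivative_contracts (r M eps : R) :
  0 < eps -> r < a ->
  (forall k, (k < n)%nat -> forall x, 0 < Rabs x <= r ->
     Cmod (A k x (f x)) <= eps / Rabs x ^ (n - k)) ->
  (forall y, -r <= y <= r -> Cmod (D n y) <= M) ->
  forall x, 0 < Rabs x <= r -> Cmod (D n x) <= 2 * INR n * (eps * 2 ^ n * M).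
Proof.
  intros Heps Hra Hcoef HM x Hx.
  assert (Hxr : -r <= x <= r) by (split_Rabs; lra).
  assert (HM0 : 0 <= M).
  { apply Rle_trans with (Cmod (D n x)); [apply Cmod_nonneg | apply HM, Hxr]. }
  apply (leading_term_bound n (D n x) (fun k => A k x (f x)) (fun k => D k x)).
  { apply ode; [split_Rabs; lra | intros ->; rewrite Rabs_R0 in Hx; lra]. }
  intros k Hk.
  assert (HDk := vanishing_derivatives_bound a r M n D D_derivs Hra initial_zero HM
                   (n - k) ltac:(lia) x Hxr).
  replace (n - (n - k))%nat with k in HDk by lia.
  assert (Hpow : Rabs x ^ (n - k) <> 0) by (apply pow_nonzero; lra).
  apply Rle_trans with (eps / Rabs x ^ (n - k) * (2 ^ (n - k) * Rabs x ^ (n - k) * M)).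
  - apply Rmult_le_compat; auto using Cmod_nonneg.
  - replace (eps / Rabs x ^ (n - k) * (2 ^ (n - k) * Rabs x ^ (n - k) * M))
      with (eps * 2 ^ (n - k) * M) by (field; exact Hpow).
    apply Rmult_le_compat_r; [exact HM0|].
    apply Rmult_le_compat_l; [lra | apply Rle_pow; [lra | lia]].
Qed.

(* Taking eps = 1/(4 n 2^n) and M the maximum of |f^(n)| on a small [-r,r],
   the estimate gives M <= M/2, so M = 0 and then f = 0 on [-r,r]. *)
Lemma complex_case_local :
  exists delta, 0 < delta < a /\ forall x, -delta <= x <= delta -> f x = C0.
Proof.
  assert (Hn : 0 < INR n) by (apply lt_0_INR; lia).
  assert (H2n : 0 < 2 ^ n) by (apply pow_lt; lra).
  set (eps := / (4 * INR n * 2 ^ n)).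
  assert (Heps : 0 < eps) by (apply Rinv_0_lt_compat; nra).
  destruct (uniform_threshold n (fun k eta => forall x, 0 < Rabs x < eta -> Rabs x < a ->
      Cmod (A k x (f x)) <= eps / Rabs x ^ (n - k))) as [eta [Heta Hcoef]].
  { intros k e e' He HP x Hx Hxa; apply HP; lra. }
  { intros k Hk; apply (small_coefs k Hk eps Heps). }
  set (r := Rmin (eta / 2) (a / 2)).
  assert (Hr : 0 < r /\ r < a /\ r < eta).
  { assert (r <= eta / 2) by apply Rmin_l; assert (r <= a / 2) by apply Rmin_r.
    assert (0 < r) by (apply Rmin_glb_lt; lra); lra. }
  set (h := fun t => Cmod (D n t)).
  assert (Hcont : forall c, -a < c < a -> continuity_pt h c).
  { intros c Hc; destruct (D_derivs n c Hc) as [Hre Him].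
    apply Cmod_continuity_pt;
      [apply (derivable_continuous_pt _ _ (exist _ _ Hre))
      | apply (derivable_continuous_pt _ _ (exist _ _ Him))]. }
  destruct (continuity_ab_maj h (-r) r) as [Mx [HM HMx]];
    [lra | intros; apply Hcont; lra |].
  set (M := h Mx).
  assert (Hhalf : forall x, 0 < Rabs x <= r -> h x <= M / 2).
  { intros x Hx.
    replace (M / 2) with (2 * INR n * (eps * 2 ^ n * M)) by (unfold eps; field; lra).
    apply (top_derivative_contracts r M eps Heps); [lra | | exact HM | exact Hx].
    intros k Hk y Hy; apply Hcoef; [exact Hk | lra | lra]. }
  assert (H0 : h 0 <= M / 2)
    by (apply (bound_extends_to_point h r); [lra | apply Hcont; lra | exact Hhalf]).
  assert (HM0 : M = 0).
  { assert (0 <= M) by apply Cmod_nonneg.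
    assert (M <= M / 2); [|lra].
    destruct (Req_dec Mx 0) as [-> | Hne]; [exact H0|].
    apply Hhalf; split; [apply Rabs_pos_lt, Hne | split_Rabs; lra]. }
  exists r; split; [lra|]; intros x Hx.
  assert (Hfx := vanishing_derivatives_bound a r M n D D_derivs (proj1 (proj2 Hr))
                   initial_zero HM n (Nat.le_refl n) x Hx).
  rewrite Nat.sub_diag, D0_f, HM0, Rmult_0_r in Hfx.
  apply Cmod_eq0, Rle_antisym; [exact Hfx | apply Cmod_nonneg].
Qed.

End ComplexCase.

(* The real case is the complex case for functions with zero imaginary part. *)
Lemma real_case_local (n : nat) (a : R) (A : nat -> R -> R -> R) (f : R -> R)
      (D : nat -> R -> R) :
  (1 <= n)%nat -> 0 < a ->
  D 0%nat = f -> derivs_on a D ->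
  (forall x, -a < x < a -> x <> 0 ->
     D n x + sum_f_R0 (fun k => A k x (f x) * D k x) (n - 1) = 0) ->
  (forall k, (k < n)%nat -> D k 0 = 0) ->
  (forall k, (k < n)%nat ->
     forall eps, 0 < eps -> exists eta, 0 < eta /\
       forall x, 0 < Rabs x < eta -> Rabs x < a ->
         Rabs (A k x (f x)) <= eps / (Rabs x ^ (n - k))) ->
  exists delta, 0 < delta < a /\ forall x, -delta <= x <= delta -> f x = 0.
Proof.
  intros Hn Ha HD0 Hd Heq Hz Hb; subst f.
  destruct (complex_case_local n a (fun k x z => (A k x (fst z), 0)) (fun x => (D 0%nat x, 0))
              (fun k x => (D k x, 0)) Hn Ha eq_refl) as [delta [Hdelta Hzero]].
  - intros k x Hx; split; [apply Hd, Hx | apply derivable_pt_lim_const].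
  - intros x Hx Hx0.
    destruct n as [|m]; [lia|].
    rewrite Csum_components; unfold Cadd, Cmul, C0; cbn [fst snd]; f_equal.
    + etransitivity; [| exact (Heq x Hx Hx0)].
      rewrite Nat.sub_1_r; cbn [Nat.pred]; f_equal.
      apply sum_eq; intros; cbn [fst snd]; ring.
    + rewrite (sum_eq _ (fun _ => 0)) by (intros; ring).
      rewrite sum_cte; ring.
  - intros k Hk; rewrite Hz by exact Hk; reflexivity.
  - intros k Hk eps Heps; destruct (Hb k Hk eps Heps) as [eta [Heta Hsmall]].
    exists eta; split; [exact Heta|]; intros x Hx Hxa.
    cbn [fst]; rewrite Cmod_real; apply Hsmall; assumption.
  - exists delta; split; [exact Hdelta|]; intros x Hx.
    exact (f_equal fst (Hzero x Hx)).
Qed.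

Theorem corollary2 :
  (* K = R *)
  (forall (n : nat) (a : R) (A : nat -> R -> R -> R) (f : R -> R)
          (D : nat -> R -> R),
     (1 <= n)%nat -> 0 < a ->
     D 0%nat = f -> derivs_on a D ->
     (forall x, -a < x < a -> x <> 0 ->
        D n x + sum_f_R0 (fun k => A k x (f x) * D k x) (n - 1) = 0) ->
     (forall k, (k < n)%nat -> D k 0 = 0) ->
     (forall k, (k < n)%nat ->
        forall eps, 0 < eps -> exists eta, 0 < eta /\
          forall x, 0 < Rabs x < eta -> Rabs x < a ->
            Rabs (A k x (f x)) <= eps / (Rabs x ^ (n - k))) ->
     exists delta, 0 < delta < a /\
       forall x, -delta <= x <= delta -> f x = 0)
  /\
  (* K = C *)
  (forall (n : nat) (a : R) (A : nat -> R -> CC -> CC) (f : R -> CC)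
          (D : nat -> R -> CC),
     (1 <= n)%nat -> 0 < a ->
     D 0%nat = f -> Cderivs_on a D ->
     (forall x, -a < x < a -> x <> 0 ->
        Cadd (D n x) (Csum n (fun k => Cmul (A k x (f x)) (D k x))) = C0) ->
     (forall k, (k < n)%nat -> D k 0 = C0) ->
     (forall k, (k < n)%nat ->
        forall eps, 0 < eps -> exists eta, 0 < eta /\
          forall x, 0 < Rabs x < eta -> Rabs x < a ->
            Cmod (A k x (f x)) <= eps / (Rabs x ^ (n - k))) ->
     exists delta, 0 < delta < a /\
       forall x, -delta <= x <= delta -> f x = C0).
Proof. split; [exact real_case_local | exact complex_case_local]. Qed.
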